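(* Let $K$ be a field containing $\mathbb{F}_q$ and let $B\in\mathrm{GL}_n(K)$, and set $B^*=(B^{-1})^T$. Then the systems $BX^{(q)}=X$ and $B^*X^{(q)}=X$ have the same splitting field over $K$.
   Context: $X^{(q)}$ denotes entrywise $q$-th power. The splitting field over $K$ of the system $CX^{(q)}=X$ (for $C\in\mathrm{GL}_n(K)$) is the subfield of a separable closure $K_{\mathrm{sep}}$ generated over $K$ by the coordinates of all solutions $X\in K_{\mathrm{sep}}^n$. *)

From HB Require Import structures.
From mathcomp Require Import all_boot all_order all_algebra all_field.
Set Implicit Arguments. Unset Strict Implicit. Unset Printing Implicit Defensive.
Import GRing.Theory.
Local Open Scope ring_scope.

Definition entrywise_pow (L : fieldType) (q : nat) (n : nat) (X : 'cV[L]_n) : 'cV[L]_n :=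
  map_mx (fun x => x ^+ q) X.

Definition is_solution (K L : fieldType) (iota : {rmorphism K -> L}) (q n : nat)
  (C : 'M[K]_n) (X : 'cV[L]_n) : Prop :=
  map_mx iota C *m entrywise_pow q X = X.

Definition separably_closed (L : fieldType) : Prop :=
  forall p : {poly L}, (1 < size p)%N -> separable_poly p -> exists x, root p x.

Definition separable_algebraic (K L : fieldType) (iota : {rmorphism K -> L}) : Prop :=
  forall x : L, exists p : {poly K},
    [/\ p != 0, separable_poly p & root (map_poly iota p) x].

Definition is_separable_closure (K L : fieldType) (iota : {rmorphism K -> L}) : Prop :=
  separably_closed L /\ separable_algebraic iota.

(* The subfield of L generated over iota(K) by the coordinates of all solutions
   of C X^(q) = X in L: intersection of all subfields of L containing iota(K)
   and these coordinates. *)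
Definition splitting_field_of_system (K L : fieldType) (iota : {rmorphism K -> L})
  (q n : nat) (C : 'M[K]_n) (z : L) : Prop :=
  forall S : {pred L}, GRing.divring_closed S ->
              (forall k : K, iota k \in S) ->
              (forall X : 'cV[L]_n, is_solution iota q C X -> forall i, X i 0 \in S) ->
              z \in S.

(* Lang's theorem: over a separably closed field L of
   characteristic p, for q a power of p and M invertible, M Y^(q) = Y has an
   invertible solution Y.  A nonzero fixed vector of v |-> M v^(q) is sought in
   the span of an orbit v_i; its coordinates are additive polynomials in one
   unknown t, whose fixed-point equation is separable, hence solvable in L.
   Taking that vector as the first basis vector makes the system block
   triangular, and induction on n together with Artin-Schreier equations
   s = s^q + c finishes the construction.

   If Y is such a matrix for the dual system B^* and B X^(q) = X, then Y^T X is
   fixed by x |-> x^q, so its entries lie in F_q, inside K; hence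
   X = (Y^T)^-1 (Y^T X) lies in the field generated over K by the entries of Y,
   which are coordinates of solutions of the dual system.  As B^** = B, the two
   splitting fields coincide. *)

From HB Require Import structures.
From mathcomp Require Import all_boot all_order all_algebra all_field.
From mathcomp Require Import zify.
Set Implicit Arguments. Unset Strict Implicit. Unset Printing Implicit Defensive.
Import GRing.Theory.
Local Open Scope ring_scope.

Lemma det_mxOver (R : comNzRingType) (S : subringClosed R) n (A : 'M[R]_n) :
  A \is a mxOver S -> \det A \in S.
Proof.
move=> /mxOverP AS; rewrite /determinant rpred_sum // => s _.
by rewrite rpredM ?rpred_sign ?rpred_prod.
Qed.

Lemma invmx_mxOver (R : comUnitRingType) (S : divringClosed R) n (A : 'M[R]_n) :
  A \is a mxOver S -> invmx A \is a mxOver S.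
Proof.
move=> AS; rewrite /invmx; case: ifP => // _; apply/mxOverP => i j.
rewrite !mxE rpredM ?rpredV ?det_mxOver // /cofactor rpredM ?rpred_sign //.
by apply/det_mxOver/mxOverP => k l; rewrite !mxE (mxOverP AS).
Qed.

Lemma size_gt2_deriv0 (R : nzRingType) (p : {poly R}) :
  p != 0 -> p.[0] = 0 -> p^`() = 0 -> (2 < size p)%N.
Proof.
move=> p_neq0 p0 dp0; rewrite ltnNge; apply: contra p_neq0 => size_p.
have c0 : p`_0 = 0 by rewrite -horner_coef0.
have c1 : p`_1 = 0 by have /polyP/(_ 0%N) := dp0; rewrite coef_deriv coef0 mulr1n.
rewrite -lead_coef_eq0 lead_coefE.
by case: (size p) size_p => [|[|[|s]]] // _; rewrite ?c0 ?c1.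
Qed.

Lemma separable_poly_derivC (R : idomainType) (p : {poly R}) (c : R) :
  c != 0 -> p^`() = c%:P -> separable_poly p.
Proof.
move=> c_neq0 dp; rewrite unlock /= dp -[c%:P]mulr1 mul_polyC.
by rewrite coprimepZr // coprimep1.
Qed.

Lemma sep_closed_fixed_point (L : fieldType) (p : {poly L}) :
  separably_closed L -> p != 0 -> p.[0] = 0 -> p^`() = 0 ->
  exists2 t, t != 0 & p.[t] = t.
Proof.
move=> sepL p_neq0 p0 dp0; set P := p - 'X.
have X_dvdP : 'X %| P.
  by rewrite -[X in X %| _]subr0 -root_factor_theorem /root !hornerE p0 subr0.
have PE : P = (P %/ 'X) * 'X by rewrite divpK.
set Q := P %/ 'X in PE.
have Q0 : Q.[0] = -1.
  have := congr1 (fun r : {poly L} => r`_1) PE.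
  have c1 : p`_1 = 0 by have /polyP/(_ 0%N) := dp0; rewrite coef_deriv coef0 mulr1n.
  by rewrite /= coefMX coefB coefX c1 sub0r horner_coef0 /= => <-.
have Q_neq0 : Q != 0.
  by apply: contra_eqN Q0 => /eqP ->; rewrite horner0 eq_sym oppr_eq0 oner_eq0.
have size_Q : (1 < size Q)%N.
  have size_p := size_gt2_deriv0 p_neq0 p0 dp0.
  rewrite -[(1 < _)%N]ltnS -(size_mulX Q_neq0) -PE /P size_polyDl //.
  by rewrite size_polyN size_polyX.
have sep_Q : separable_poly Q.
  apply: (dvdp_separable (dvdp_mulr 'X (dvdpp Q))); rewrite -PE.
  apply: (@separable_poly_derivC _ _ (-1)); first by rewrite oppr_eq0 oner_eq0.
  by rewrite /P derivB dp0 derivX sub0r polyCN.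
have [t Qt] := sepL Q size_Q sep_Q.
exists t; first by apply: contraTneq Qt => ->; rewrite /root Q0 oppr_eq0 oner_eq0.
move/eqP: (congr1 (horner^~ t) PE); rewrite /P !hornerE (rootP Qt) mul0r.
by rewrite subr_eq0 => /eqP.
Qed.

Lemma unitmx_first_col (F : fieldType) n (w : 'cV[F]_(1 + n)) :
  w != 0 -> exists2 P, P \in unitmx & P *m col_mx 1%:M 0 = w.
Proof.
move=> w_neq0; have rank_w : \rank w = 1%N.
  by apply/eqP; rewrite eqn_leq rank_leq_col lt0n mxrank_eq0.
have c_unit : row_ebase w 0 0 \is a GRing.unit.
  by have := row_ebase_unit w; rewrite unitmxE det_mx11.
exists (row_ebase w 0 0 *: col_ebase w); first by rewrite unitmxZ ?col_ebase_unit.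
apply: etrans (mulmx_ebase w); rewrite rank_w pid_mx_col [row_ebase w]mx11_scalar.
by rewrite mul_mx_scalar -scalemxAl mxE mulr1n.
Qed.

Lemma fixed_first_col_block (R : pzRingType) n (A : 'M[R]_(1 + n)) :
  A *m col_mx 1%:M 0 = col_mx 1%:M 0 -> A = block_mx 1%:M (ursubmx A) 0 (drsubmx A).
Proof.
rewrite -[A in A *m _]submxK mul_block_col !mulmx1 !mulmx0 !addr0.
by case/eq_col_mx => ul dl; rewrite -[LHS]submxK ul dl.
Qed.

Lemma finField_card_pnat (F : finFieldType) (R : nzRingType) (f : {rmorphism F -> R}) :
  [pchar R].-nat #|F|.
Proof.
have [p p_prime pcharF] := finPcharP F.
by rewrite (card_pprimeChar pcharF) pnatX pnatE // (rmorph_pchar f pcharF).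
Qed.

Lemma finField_fixed_image (F : finFieldType) (R : idomainType) (f : {rmorphism F -> R})
  (c : R) : c ^+ #|F| = c -> exists x, c = f x.
Proof.
move=> c_fixed; have : root (map_poly f ('X^#|F| - 'X)) c.
  by rewrite rmorphB /= map_polyXn map_polyX rootE !hornerE c_fixed subrr.
rewrite finField_genPoly rmorph_prod.
have -> : \prod_(x : F) map_poly f ('X - x%:P) =
          \prod_(z <- [seq f x | x <- enum F]) ('X - z%:P).
  by rewrite big_map big_enum; apply: eq_bigr => x _; rewrite rmorphB /= map_polyX map_polyC.
by rewrite root_prod_XsubC => /mapP[x _ ->]; exists x.
Qed.

Section Frobenius.
Variables (L : fieldType) (q : nat).
Hypotheses (q_gt1 : (1 < q)%N) (pchar_q : [pchar L].-nat q).

Definition qfrob (x : L) := x ^+ q.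

Lemma qfrob_is_zmod : zmod_morphism qfrob.
Proof. by move=> x y; rewrite /qfrob exprDn_pchar // exprNn_pchar. Qed.
HB.instance Definition _ := GRing.isZmodMorphism.Build L L qfrob qfrob_is_zmod.

Lemma qfrob_is_monoid : monoid_morphism qfrob.
Proof. by split=> [|x y]; rewrite /qfrob ?expr1n ?exprMn. Qed.
HB.instance Definition _ := GRing.isMonoidMorphism.Build L L qfrob qfrob_is_monoid.

Lemma natr_q : q%:R = 0 :> L.
Proof.
have pchar_pdiv : pdiv q \in [pchar L] by apply: pnatPpi pchar_q _; rewrite pi_pdiv.
by rewrite -(divnK (pdiv_dvd q)) natrM (pcharf0 pchar_pdiv) mulr0.
Qed.

Lemma deriv_Xq : ('X^q : {poly L})^`() = 0.
Proof. by rewrite derivXn -mulr_natr -polyC_natr natr_q mulr0. Qed.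

Lemma expr0q (R : pzSemiRingType) : (0 : R) ^+ q = 0.
Proof. by rewrite expr0n; case: q q_gt1. Qed.

(* If v_(d+1) = \sum_(i <= d) a_i v_i along an orbit v_(i+1) = M v_i^(q),
   then \sum_i c_i v_i is fixed exactly when c_i = (fixcoef a i).[t] for all i,
   where t = c_d satisfies (fixcoef a d).[t] = t. *)
Fixpoint fixcoef (a : nat -> L) (i : nat) : {poly L} :=
  if i is i'.+1 then fixcoef a i' ^+ q + a i *: 'X^q else a 0%N *: 'X^q.

Lemma fixcoef_at0 a i : (fixcoef a i).[0] = 0.
Proof.
elim: i => [|i IHi] /=; first by rewrite hornerZ hornerXn expr0q mulr0.
by rewrite hornerD horner_exp hornerZ hornerXn IHi expr0q mulr0 addr0.
Qed.

Lemma deriv_fixcoef a i : (fixcoef a i)^`() = 0.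
Proof.
elim: i => [|i IHi] /=; first by rewrite derivZ deriv_Xq scaler0.
by rewrite derivD deriv_exp IHi mul0r mul0rn derivZ deriv_Xq scaler0 addr0.
Qed.

Lemma fixcoefS_neq0 a i : fixcoef a i != 0 -> fixcoef a i.+1 != 0.
Proof.
move=> fi_neq0.
have size_fi := size_gt2_deriv0 fi_neq0 (fixcoef_at0 a i) (deriv_fixcoef a i).
have size_lt : (size (a i.+1 *: 'X^q) < size (fixcoef a i ^+ q))%N.
  apply: leq_ltn_trans (size_scale_leq _ _) _; rewrite size_polyXn.
  have := size_exp (fixcoef a i) q; move: (size _) (size _) size_fi q_gt1 => s t.
  nia.
by rewrite /= -size_poly_eq0 size_polyDl // size_poly_eq0 expf_neq0.
Qed.

Lemma fixcoef_neq0 a i j : a i != 0 -> (i <= j)%N -> fixcoef a j != 0.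
Proof.
move=> ai_neq0; have fi_neq0 : fixcoef a i != 0.
  case: i ai_neq0 => [|i] ai_neq0 /=.
    by rewrite scaler_eq0 negb_or ai_neq0 -size_poly_eq0 size_polyXn.
  have [fi0|/fixcoefS_neq0 //] := eqVneq (fixcoef a i) 0.
  by rewrite fi0 expr0q add0r scaler_eq0 negb_or ai_neq0 -size_poly_eq0 size_polyXn.
elim: j => [|j IHj]; first by rewrite leqn0 => /eqP <-.
by rewrite leq_eqVlt ltnS => /orP[/eqP <- // | /IHj /fixcoefS_neq0].
Qed.

Hypothesis sepL : separably_closed L.

Lemma artin_schreier_root (c : L) : exists s, s = s ^+ q + c.
Proof.
set P : {poly L} := 'X^q - 'X + c%:P.
have size_P : size P = q.+1.
  rewrite /P -addrA size_polyDl ?size_polyXn // ltnS.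
  apply: leq_trans (size_polyD _ _) _; rewrite size_polyN size_polyX size_polyC.
  by rewrite geq_max q_gt1 (leq_trans (leq_b1 _) (ltnW q_gt1)).
have sep_P : separable_poly P.
  apply: (@separable_poly_derivC _ _ (-1)); first by rewrite oppr_eq0 oner_eq0.
  by rewrite /P derivD derivB deriv_Xq derivX derivC sub0r addr0 polyCN.
have [s s_root] : exists s, root P s by apply: sepL; rewrite // size_P ltnS ltnW.
by exists s; move: s_root; rewrite /root !hornerE addrAC subr_eq0 eq_sym => /eqP.
Qed.

Section FixedVector.
Variables (n : nat) (M : 'M[L]_n) (v0 : 'cV[L]_n).
Hypotheses (M_unit : M \in unitmx) (v0_neq0 : v0 != 0).

Definition sigma (v : 'cV[L]_n) := M *m map_mx qfrob v.

Lemma sigma_is_zmod : zmod_morphism sigma.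
Proof. by move=> u v; rewrite /sigma raddfB mulmxBr. Qed.
HB.instance Definition _ := GRing.isZmodMorphism.Build _ _ sigma sigma_is_zmod.

Lemma sigmaZ c v : sigma (c *: v) = c ^+ q *: sigma v.
Proof. by rewrite /sigma map_mxZ scalemxAr. Qed.

Lemma sigma_eq0 v : (sigma v == 0) = (v == 0).
Proof.
by rewrite /sigma -{1}(mulmx0 _ M) (inj_eq (can_inj (mulKmx M_unit))) map_mx_eq0.
Qed.

Definition orbit_vec k := iter k sigma v0.

Lemma orbit_vec_neq0 k : orbit_vec k != 0.
Proof. by elim: k => //= k; rewrite sigma_eq0. Qed.

(* Newest vector first, to match [free_cons]. *)
Fixpoint orbit_prefix k :=
  if k is k'.+1 then orbit_vec k' :: orbit_prefix k' else [::].

Lemma mem_orbit_prefix k i : (i < k)%N -> orbit_vec i \in orbit_prefix k.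
Proof.
elim: k => // k IHk; rewrite inE ltnS leq_eqVlt => /orP[/eqP -> | /IHk ->].
  by rewrite eqxx.
by rewrite orbT.
Qed.

Lemma memv_orbit_prefix k (c : nat -> L) :
  \sum_(i < k) c i *: orbit_vec i \in <<orbit_prefix k>>%VS.
Proof. by apply: rpred_sum => i _; apply/rpredZ/memv_span/mem_orbit_prefix. Qed.

Lemma orbit_prefixP k v : v \in <<orbit_prefix k>>%VS ->
  exists c : nat -> L, v = \sum_(i < k) c i *: orbit_vec i.
Proof.
elim: k v => [|k IHk] v /=.
  by rewrite span_nil memv0 => /eqP ->; exists (fun _ => 0); rewrite big_ord0.
rewrite span_cons => /memv_addP[_ /vlineP[c ->] [u /IHk[b ->] ->]].
exists (fun i => if i == k then c else b i); rewrite big_ord_recr /= eqxx addrC.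
by congr (_ + _); apply: eq_bigr => i _; rewrite ltn_eqF.
Qed.

Lemma orbit_dependent : exists d, orbit_vec d \in <<orbit_prefix d>>%VS.
Proof.
have [/existsP[d d_dep] | /existsPn indep] :=
  boolP [exists d : 'I_n.+1, orbit_vec d \in <<orbit_prefix d>>%VS].
  by exists d.
have free_prefix k : (k <= n.+1)%N -> free (orbit_prefix k).
  elim: k => [|k IHk] k_le; first exact: nil_free.
  by rewrite /= free_cons IHk ?(ltnW k_le) // andbT (indep (Ordinal k_le)).
have size_prefix k : size (orbit_prefix k) = k by elim: k => //= k ->.
have := dimvS (subvf <<orbit_prefix n.+1>>%VS).
by rewrite dimvf (eqP (free_prefix _ (leqnn _))) size_prefix /dim /= muln1 ltnn.
Qed.

Lemma sigma_fixcoef_comb d (a : nat -> L) t :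
  orbit_vec d.+1 = \sum_(i < d.+1) a i *: orbit_vec i -> (fixcoef a d).[t] = t ->
  sigma (\sum_(i < d.+1) (fixcoef a i).[t] *: orbit_vec i) =
  \sum_(i < d.+1) (fixcoef a i).[t] *: orbit_vec i.
Proof.
move=> orbit_rel fix_t; rewrite raddf_sum /=; under eq_bigr do rewrite sigmaZ.
rewrite big_ord_recr /= fix_t (_ : sigma (orbit_vec d) = orbit_vec d.+1) // orbit_rel.
rewrite big_ord_recl [in RHS]big_ord_recl /= scalerDr scaler_sumr !scalerA addrCA.
congr (_ + _); first by rewrite hornerZ hornerXn mulrC.
rewrite -big_split; apply: eq_bigr => i _ /=; rewrite scalerA -scalerDl.
by rewrite hornerD horner_exp hornerZ hornerXn mulrC.
Qed.

Lemma sigma_fixed_vector : exists2 w, w != 0 & sigma w = w.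
Proof.
have [[|d] d_dep d_min] := ex_minnP orbit_dependent.
  by move: d_dep; rewrite span_nil memv0 (negPf (orbit_vec_neq0 0)).
have [a orbit_rel] := orbit_prefixP d_dep.
have [j a_j] : exists j : 'I_d.+1, a j != 0.
  apply/existsP; apply: contraT; rewrite negb_exists => /forallP a0.
  move: (orbit_vec_neq0 d.+1); rewrite orbit_rel big1 ?eqxx // => i _.
  by rewrite (eqP (negPn (a0 i))) scale0r.
have [t t_neq0 fix_t] := sep_closed_fixed_point sepL
  (fixcoef_neq0 a_j (ltn_ord j : (j <= d)%N)) (fixcoef_at0 a d) (deriv_fixcoef a d).
exists (\sum_(i < d.+1) (fixcoef a i).[t] *: orbit_vec i);
  last exact: sigma_fixcoef_comb.
apply/eqP => w0; suff /d_min : orbit_vec d \in <<orbit_prefix d>>%VS by rewrite ltnn.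
have -> : orbit_vec d = \sum_(i < d) (- ((fixcoef a i).[t] / t)) *: orbit_vec i.
  apply: (scalerI t_neq0); move: w0; rewrite big_ord_recr /= fix_t => /eqP.
  rewrite addrC addr_eq0 => /eqP ->; rewrite scaler_sumr -sumrN; apply: eq_bigr => i _.
  by rewrite scalerA mulrN mulrCA mulfV // mulr1 scaleNr.
exact: (memv_orbit_prefix d (fun i => - ((fixcoef a i).[t] / t))).
Qed.

End FixedVector.

Lemma artin_schreier_row n (c : 'rV[L]_n) : exists s, s = map_mx qfrob s + c.
Proof.
have [f fP] := fin_all_exists (fun j => artin_schreier_root (c 0 j)).
by exists (\row_j f j); apply/matrixP => i j; rewrite ord1 !mxE [LHS]fP.
Qed.

Lemma lang_conj n (M P Y : 'M[L]_n) : P \in unitmx ->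
  (invmx P *m M *m map_mx qfrob P) *m map_mx qfrob Y = Y ->
  M *m map_mx qfrob (P *m Y) = P *m Y.
Proof. by move=> P_unit fixY; rewrite -[in RHS]fixY map_mxM !mulmxA mulmxV // mul1mx. Qed.

Lemma lang_block n (r : 'rV[L]_n) (N Z' : 'M[L]_n) :
  Z' \in unitmx -> N *m map_mx qfrob Z' = Z' ->
  exists2 Z, Z \in unitmx & block_mx 1%:M r 0 N *m map_mx qfrob Z = Z.
Proof.
move=> Z'_unit fixZ'; have [s sE] := artin_schreier_row (r *m map_mx qfrob Z').
exists (block_mx 1%:M s 0 Z'); first by rewrite unitmxE det_ublock det1 mul1r -unitmxE.
rewrite map_block_mx map_mx1 map_mx0 mulmx_block !mul1mx !mul0mx !mulmx0.
by rewrite !add0r !addr0 fixZ' -sE.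
Qed.

Theorem lang_fixed_unitmx n (M : 'M[L]_n) : M \in unitmx ->
  exists2 Y, Y \in unitmx & M *m map_mx qfrob Y = Y.
Proof.
elim: n M => [|n IHn] M M_unit.
  by exists 1%:M; [exact: unitmx1 | apply/matrixP => -[]].
(* Move a fixed vector to the first basis vector: M becomes block triangular. *)
set e : 'cV[L]_(1 + n) := col_mx 1%:M 0.
have e_neq0 : e != 0.
  apply/eqP; rewrite -col_mx0 => /eq_col_mx[/matrixP/(_ 0 0)/eqP + _].
  by rewrite !mxE mulr1n oner_eq0.
have [w w_neq0 fix_w] := sigma_fixed_vector M_unit e_neq0.
have [P P_unit Pe] := unitmx_first_col w_neq0.
set M' := invmx P *m M *m map_mx qfrob P.
have M'e : M' *m e = e.
  have qfrob_e : map_mx qfrob e = e by rewrite map_col_mx map_mx1 map_mx0.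
  by rewrite /M' -!mulmxA -{1}qfrob_e -map_mxM Pe [M *m _]fix_w -Pe mulKmx.
have N_unit : drsubmx M' \in unitmx.
  have : M' \in unitmx by rewrite !unitmx_mul unitmx_inv P_unit M_unit map_unitmx.
  by rewrite {1}(fixed_first_col_block M'e) unitmxE det_ublock det1 mul1r -unitmxE.
have [Z' Z'_unit fixZ'] := IHn _ N_unit.
have [Z Z_unit fixZ] := lang_block (ursubmx M') Z'_unit fixZ'.
exists (P *m Z); first by rewrite unitmx_mul P_unit.
by apply: lang_conj; rewrite // -/M' {1}(fixed_first_col_block M'e).
Qed.

Lemma qfrob_pairing_fixed n (C Y : 'M[L]_n) (X : 'cV[L]_n) : C \in unitmx ->
  C *m map_mx qfrob X = X -> (invmx C)^T *m map_mx qfrob Y = Y ->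
  map_mx qfrob (Y^T *m X) = Y^T *m X.
Proof.
move=> C_unit fixX fixY; have YqE : map_mx qfrob Y = C^T *m Y.
  by rewrite -[in RHS]fixY mulmxA -trmx_mul mulVmx // trmx1 mul1mx.
by rewrite map_mxM -map_trmx YqE trmx_mul trmxK -mulmxA fixX.
Qed.

Section SplittingField.
Variables (K : fieldType) (iota : {rmorphism K -> L}).
Hypothesis qfrob_fixed_in_K : forall c : L, c ^+ q = c -> exists k, c = iota k.
Variable S : {pred L}.
Hypotheses (S_divring : GRing.divring_closed S) (K_in_S : forall k, iota k \in S).
HB.instance Definition _ := GRing.isDivringClosed.Build L S S_divring.

Lemma solutions_in_dual_closure n (C : 'M[K]_n) : C \in unitmx ->
  (forall X, is_solution iota q (invmx C)^T X -> forall i, X i 0 \in S) ->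
  forall X, is_solution iota q C X -> forall i, X i 0 \in S.
Proof.
move=> C_unit dual_in_S X solX.
have dual_unit : map_mx iota (invmx C)^T \in unitmx.
  by rewrite map_unitmx unitmx_tr unitmx_inv.
have [Y Y_unit fixY] := lang_fixed_unitmx dual_unit.
have YS : Y^T \is a mxOver S.
  apply/mxOverP => i j; have := dual_in_S (col i Y) _ j; rewrite !mxE; apply.
  rewrite /is_solution /entrywise_pow -[map_mx _ (col i Y)]/(map_mx qfrob _).
  by rewrite map_col !colE mulmxA fixY.
have pairing_fixed : map_mx qfrob (Y^T *m X) = Y^T *m X.
  apply: (qfrob_pairing_fixed (C := map_mx iota C)); first by rewrite map_unitmx.
    exact: solX.
  by rewrite -map_invmx map_trmx.
have pairingS : Y^T *m X \is a mxOver S.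
  apply/mxOverP => i j; have /matrixP/(_ i j) := pairing_fixed; rewrite mxE.
  by move=> /qfrob_fixed_in_K[k ->].
have -> : X = invmx Y^T *m (Y^T *m X) by rewrite mulKmx // unitmx_tr.
by move=> i; apply/(mxOverP (mxOverM (invmx_mxOver YS) pairingS)).
Qed.

End SplittingField.

End Frobenius.

Theorem proposition4p3 (F : finFieldType) (K L : fieldType)
  (phi : {rmorphism F -> K}) (iota : {rmorphism K -> L})
  (n : nat) (B : 'M[K]_n) :
  is_separable_closure iota -> B \in unitmx ->
  forall z : L, splitting_field_of_system iota #|F| B z <->
                splitting_field_of_system iota #|F| (invmx B)^T z.
Proof.
move=> [sepL _] B_unit z.
have q_gt1 := finNzRing_gt1 F.
have pchar_q := finField_card_pnat (iota \o phi).
have fixed_in_K c : c ^+ #|F| = c -> exists k, c = iota k.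
  by move/(finField_fixed_image (iota \o phi)) => [x ->]; exists (phi x).
have dual_unit : (invmx B)^T \in unitmx by rewrite unitmx_tr unitmx_inv.
have B_bidual : (invmx (invmx B)^T)^T = B by rewrite trmx_inv trmxK invmxK.
split=> zS S S_divring K_in_S sol_in_S; apply: zS => // X solX.
  exact: (solutions_in_dual_closure q_gt1 pchar_q sepL fixed_in_K S_divring K_in_S
           B_unit).
apply: (solutions_in_dual_closure q_gt1 pchar_q sepL fixed_in_K S_divring K_in_S
          dual_unit) solX.
by rewrite B_bidual.
Qed.
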